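(* For every $n\geq0$, the dimension of the $n$th graded component of the quotient $\mathbf{ASM}/\mathcal{I}_{\operatorname{nw}}$ is $\binom{n}{2}+1$.
   Context: An ASM of size $n$ is an $n\times n$ matrix over $\{0,1,-1\}$ whose nonzero entries in every row and column alternate in sign, starting and ending with $+1$. For an ASM $\delta$, $\operatorname{nw}(\delta)$ is the number of positions $(i,j)$ with $\delta_{ij}=0$, $\sum_{i'<i}\delta_{i'j}=0$ and $\sum_{j'<j}\delta_{ij'}=1$ (the number of vertices of type nw in the associated six-vertex configuration with domain wall boundary conditions). $\mathbf{ASM}$ is the graded vector space (over $\mathbb{K}$ of characteristic zero) with basis $(\mathbf{F}_{M^\delta})$ indexed by ASMs, graded by size. $\mathcal{I}_{\operatorname{nw}}$ is the subspace spanned by all $\mathbf{F}_{M^{\delta_1}}-\mathbf{F}_{M^{\delta_2}}$ with $\delta_1,\delta_2$ ASMs of the same size satisfying $\operatorname{nw}(\delta_1)=\operatorname{nw}(\delta_2)$; the quotient is graded by size. *)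

From HB Require Import structures.
From mathcomp Require Import all_boot all_order all_algebra.

Set Implicit Arguments.
Unset Strict Implicit.
Unset Printing Implicit Defensive.

Import GRing.Theory Num.Theory.
Local Open Scope ring_scope.

(* Entries of an ASM are encoded by 'I_3 : 0 |-> 0, 1 |-> 1, 2 |-> -1. *)
Definition ent (e : 'I_3) : int :=
  match val e with 0%N => 0 | 1%N => 1 | _ => -1 end.

Definition alt_ok (s : seq int) : bool :=
  let t := [seq x <- s | x != 0] in
  odd (size t) && (t == mkseq (fun k => (-1) ^+ k) (size t)).

Definition is_asm (n : nat) (M : 'M[int]_n) : bool :=
  [forall i : 'I_n, alt_ok [seq M i j | j <- enum 'I_n]] &&
  [forall j : 'I_n, alt_ok [seq M i j | i <- enum 'I_n]].

Definition ASM (n : nat) := {M : 'M['I_3]_n | is_asm (map_mx ent M)}.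

Definition asm_mx (n : nat) (d : ASM n) : 'M[int]_n := map_mx ent (val d).

Definition nw (n : nat) (d : ASM n) : nat :=
  #|[set ij : 'I_n * 'I_n |
      [&& asm_mx d ij.1 ij.2 == 0,
          \sum_(i' < n | (i' < ij.1)%N) asm_mx d i' ij.2 == 0 &
          \sum_(j' < n | (j' < ij.2)%N) asm_mx d ij.1 j' == 1]]|.

(* n-th graded component of ASM: the K-vector space with basis (F_d)_{d ASM of size n} *)
Definition ASMn (K : fieldType) (n : nat) := {ffun ASM n -> K^o}.

Definition Fbasis (K : fieldType) (n : nat) (d : ASM n) : ASMn K n :=
  [ffun x : ASM n => ((x == d)%:R : K^o)].

Definition Inw (K : fieldType) (n : nat) : {vspace ASMn K n} :=
  <<[seq Fbasis K p.1 - Fbasis K p.2 |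
       p <- enum [pred p : (ASM n * ASM n)%type | nw p.1 == nw p.2]]>>%VS.

Definition quot_dim (K : fieldType) (n : nat) : nat :=
  (\dim (fullv : {vspace ASMn K n}) - \dim (Inw K n))%N.

From HB Require Import structures.
From mathcomp Require Import all_boot all_order all_algebra.
From mathcomp Require Import fingroup perm zify.

Set Implicit Arguments.
Unset Strict Implicit.
Unset Printing Implicit Defensive.

Import GRing.Theory Num.Theory.
Local Open Scope ring_scope.

(* Summing the coefficients over each fibre of nw is a linear map onto K^N, N the number
   of values of nw, which kills I_nw; and I_nw together with one basis vector per value
   spans everything. So the quotient has dimension N, and it remains to see that nw
   takes exactly the values 0, ..., C(n, 2). The column prefix sums of an ASM are 0 or 1,
   and exactly n - i - 1 of them vanish through row i, while an nw vertex in row i needs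
   one that does; this bounds nw by C(n, 2). Conversely nw of a permutation matrix is the
   number of non-inversions of the permutation, which takes every value up to C(n, 2). *)

Section Delta.
Variables (K : fieldType) (I : finType).

Definition delta (i : I) : {ffun I -> K^o} := [ffun x => ((x == i)%:R : K^o)].

Lemma ffun_delta_sum (g : {ffun I -> K^o}) : g = \sum_i g i *: delta i.
Proof.
apply/ffunP => x; rewrite sum_ffunE (bigD1 x) //= big1 ?addr0 => [|y /negbTE yx].
  by rewrite !ffunE eqxx /= -[RHS]/(g x * 1) mulr1.
by rewrite !ffunE eq_sym yx scaler0.
Qed.

End Delta.

Section FiberQuotient.
Variables (K : fieldType) (I : finType) (f : I -> nat) (N : nat).
Local Notation delta := (@delta K _).

Definition fiber_diffs : {vspace {ffun I -> K^o}} :=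
  <<[seq delta p.1 - delta p.2 | p <- enum [pred p : (I * I)%type | f p.1 == f p.2]]>>%VS.

Definition fiber_sum (g : {ffun I -> K^o}) : {ffun 'I_N -> K^o} :=
  [ffun v : 'I_N => \sum_(i | f i == v) g i].

Lemma fiber_sum_is_linear : linear fiber_sum.
Proof.
move=> a g h; apply/ffunP => v; rewrite !ffunE scaler_sumr -big_split.
by apply: eq_bigr => i _; rewrite !ffunE.
Qed.

HB.instance Definition _ :=
  GRing.isLinear.Build _ _ _ _ fiber_sum fiber_sum_is_linear.

Lemma fiber_sum_delta i : fiber_sum (delta i) = [ffun v : 'I_N => ((f i == v)%:R : K^o)].
Proof.
apply/ffunP => v; rewrite !ffunE.
have [fiv | fiNv] := eqVneq (f i) v.
  rewrite (bigD1 i) ?fiv //= ffunE eqxx big1 ?addr0 // => x /andP[_ /negbTE xi].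
  by rewrite ffunE xi.
by apply: big1 => x /eqP fxv; rewrite ffunE; case: eqP fxv => // -> /eqP; rewrite (negbTE fiNv).
Qed.

Lemma fiber_diffs_sub_ker : (fiber_diffs <= lker (linfun fiber_sum))%VS.
Proof.
apply/span_subvP => _ /mapP[[a b] + ->]; rewrite mem_enum /= => /eqP fab.
by rewrite memv_ker lfunE /= linearB /= !fiber_sum_delta fab subrr.
Qed.

Hypothesis f_lt : forall i, (f i < N)%N.
Hypothesis f_surj : forall v, (v < N)%N -> exists i, f i = v.

Lemma limg_fiber_sum : limg (linfun fiber_sum) = fullv.
Proof.
apply/eqP; rewrite eqEsubv subvf /=; apply/subvP => h _.
rewrite [h]ffun_delta_sum memv_suml // => v _; apply: memvZ.
have [i fiv] := f_surj (ltn_ord v).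
have -> : delta v = linfun fiber_sum (delta i).
  apply/ffunP => w; rewrite lfunE /= fiber_sum_delta !ffunE fiv.
  by rewrite (inj_eq val_inj) eq_sym.
exact/memv_img/memvf.
Qed.

Lemma exists_fiber (v : 'I_N) : exists i, f i == v.
Proof. by have [i fiv] := f_surj (ltn_ord v); exists i; rewrite fiv. Qed.

Definition fiber_rep (v : 'I_N) : I := xchoose (exists_fiber v).

Lemma fiber_repP v : f (fiber_rep v) = v.
Proof. exact/eqP/(xchooseP (exists_fiber v)). Qed.

Lemma fullv_fiber_diffs_reps :
  (fullv <= fiber_diffs + <<[seq delta (fiber_rep v) | v <- enum 'I_N]>>)%VS.
Proof.
apply/subvP => g _; rewrite [g]ffun_delta_sum memv_suml // => i _; apply: memvZ.
pose v := Ordinal (f_lt i); have fri : f (fiber_rep v) = f i by rewrite fiber_repP.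
rewrite -(subrK (delta (fiber_rep v)) (delta i)) memv_add ?memv_span //.
  by apply/mapP; exists (i, fiber_rep v); rewrite // mem_enum inE /= fri.
by apply/mapP; exists v; rewrite ?mem_enum.
Qed.

Lemma dim_fiber_quotient : (\dim (fullv : {vspace {ffun I -> K^o}}) - \dim fiber_diffs)%N = N.
Proof.
apply/eqP; rewrite eqn_leq; apply/andP; split.
  have [dim_add _] := dimv_add_leqif fiber_diffs
    <<[seq delta (fiber_rep v) | v <- enum 'I_N]>>%VS.
  have := dim_span [seq delta (fiber_rep v) | v <- enum 'I_N].
  rewrite size_map size_enum_ord => dim_reps.
  rewrite leq_subLR (leq_trans (dimvS fullv_fiber_diffs_reps)) //.
  by rewrite (leq_trans dim_add) // leq_add2l.
have := limg_ker_dim (linfun fiber_sum) fullv.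
rewrite capfv limg_fiber_sum dimvf /dim /= card_ord muln1 => rank_nullity.
rewrite leq_subRL ?dimvS ?subvf // -rank_nullity leq_add2r.
exact: dimvS fiber_diffs_sub_ker.
Qed.

End FiberQuotient.

Lemma sum_alt_signs k : \sum_(x <- mkseq (fun i => (-1) ^+ i : int) k) x = (odd k)%:Z.
Proof.
rewrite /mkseq big_map; elim: k => [|k IHk]; first by rewrite big_nil.
rewrite -addn1 iotaD big_cat /= IHk big_cons big_nil addr0 add0n addn1 /=.
by rewrite -signr_odd; case: (odd k).
Qed.

Lemma big_filter_nz (s : seq int) : \sum_(x <- [seq x <- s | x != 0]) x = \sum_(x <- s) x.
Proof. by rewrite big_filter big_mkcond; apply: eq_bigr => x _; case: eqP => // ->. Qed.

Lemma alt_ok_sum s : alt_ok s -> \sum_(x <- s) x = 1.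
Proof. by case/andP => odd_s /eqP alt_s; rewrite -big_filter_nz alt_s sum_alt_signs odd_s. Qed.

(* A prefix of an alternating sequence has as nonzero part a prefix of 1, -1, 1, ... *)
Lemma alt_ok_prefix_sum s k : alt_ok s ->
  (\sum_(x <- take k s) x == 0) || (\sum_(x <- take k s) x == 1).
Proof.
case/andP => _ /eqP alt_s.
have split_s : [seq x <- take k s | x != 0] ++ [seq x <- drop k s | x != 0] =
               [seq x <- s | x != 0] by rewrite -filter_cat cat_take_drop.
have := take_size_cat [seq x <- drop k s | x != 0] (erefl (size [seq x <- take k s | x != 0])).
rewrite split_s alt_s -map_take take_iota -big_filter_nz => <-.
by rewrite -/(mkseq _ _) sum_alt_signs; case: odd.
Qed.

Lemma sum_ord_lt_take n (F : 'I_n -> int) k :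
  \sum_(i < n | (i < k)%N) F i = \sum_(x <- take k [seq F i | i <- enum 'I_n]) x.
Proof.
elim: n F k => [|n IHn] F k; first by rewrite big_ord0 enum_ord0 big_nil.
rewrite enum_ordSl /= big_mkcond big_ord_recl /=.
case: k => [|k] /=; first by rewrite big_nil add0r big1.
by rewrite big_cons -map_comp -IHn; congr (_ + _); rewrite [RHS]big_mkcond.
Qed.

Lemma card_pair_set n (P : pred ('I_n * 'I_n)) :
  #|[set ij | P ij]| = (\sum_i \sum_j P (i, j))%N.
Proof.
rewrite -sum1_card pair_big /= big_mkcond /=.
by apply: eq_bigr => -[i j] _; rewrite inE; case: P.
Qed.

Lemma sum_ord_subS n : (\sum_(i < n) (n - i.+1))%N = 'C(n, 2).
Proof.
elim: n => [|n IHn]; first by rewrite big_ord0.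
by rewrite big_ord_recl subn1 binS bin1 -IHn addnC.
Qed.

Section ASMColumnSums.
Variables (n : nat) (d : ASM n).
Local Notation A := (asm_mx d).

Lemma asm_row_alt i : alt_ok [seq A i j | j <- enum 'I_n].
Proof. by have /andP[/forallP] := valP d. Qed.

Lemma asm_col_alt j : alt_ok [seq A i j | i <- enum 'I_n].
Proof. by have /andP[_ /forallP] := valP d. Qed.

Lemma asm_row_sum i : \sum_j A i j = 1.
Proof.
rewrite (eq_bigl (fun j : 'I_n => (j < n)%N)); last by move=> j; rewrite ltn_ord.
rewrite sum_ord_lt_take take_oversize; first exact: alt_ok_sum (asm_row_alt i).
by rewrite size_map size_enum_ord.
Qed.

Definition col_prefix k j := \sum_(i < n | (i < k)%N) A i j.

Lemma col_prefix01 k j : (col_prefix k j == 0) || (col_prefix k j == 1).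
Proof. by rewrite /col_prefix sum_ord_lt_take; apply/alt_ok_prefix_sum/asm_col_alt. Qed.

Lemma col_prefixS (i j : 'I_n) : col_prefix i.+1 j = col_prefix i j + A i j.
Proof.
rewrite /col_prefix (bigD1 i) //= addrC; congr (_ + _).
apply: eq_bigl => i'; rewrite ltnS leq_eqVlt -(inj_eq val_inj) /=.
by case: eqP => [->|]; rewrite ?ltnn ?andbT.
Qed.

Lemma sum_col_prefix k : (k <= n)%N -> \sum_j col_prefix k j = k%:Z.
Proof.
move=> le_kn; rewrite /col_prefix exchange_big /=.
rewrite (eq_bigr (fun _ => 1)); last by move=> i _; apply: asm_row_sum.
by rewrite -(big_ord_widen n (fun _ => 1 : int) le_kn) sumr_const card_ord natz.
Qed.

(* Each of the first k rows contributes a 1 to the column prefix sums, which are 0 or 1. *)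
Lemma count_col_prefix0 k : (k <= n)%N -> (\sum_j (col_prefix k j == 0))%N = (n - k)%N.
Proof.
move=> le_kn.
have count_nz : (\sum_j (col_prefix k j != 0))%N = k.
  apply/eqP; rewrite -(eqr_nat int) natr_sum [k%:R]natz -(sum_col_prefix le_kn).
  by apply/eqP/eq_bigr => j _; case/orP: (col_prefix01 k j) => /eqP ->.
have count_all : (\sum_j (col_prefix k j == 0) + \sum_j (col_prefix k j != 0))%N = n.
  by rewrite -big_split -[RHS]card_ord -sum1_card; apply: eq_bigr => j _; case: eqP.
by move: count_all; rewrite count_nz; move: (\sum_j _)%N => m <-; rewrite addnK.
Qed.

Lemma nw_leq_bin2 : (nw d <= 'C(n, 2))%N.
Proof.
rewrite /nw card_pair_set -sum_ord_subS; apply: leq_sum => i _.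
rewrite -count_col_prefix0 //; apply: leq_sum => j _ /=.
case: and3P => // -[/eqP Aij0 /eqP col0 _].
by rewrite col_prefixS /col_prefix col0 Aij0 addr0 eqxx.
Qed.

End ASMColumnSums.

Definition noninv n (s : 'S_n) : nat :=
  (\sum_(i < n) \sum_(k < n) ((i < k)%N && (s i < s k)%N))%N.

Lemma sum_ord_geq n t : (\sum_(x < n) (t <= x))%N = (n - t)%N.
Proof.
elim: n => [|n IHn]; first by rewrite big_ord0.
rewrite big_ord_recr /= IHn; case: leqP => /= h; [rewrite addn1|rewrite addn0]; lia.
Qed.

Lemma ltn_lift n (t : 'I_n.+1) (x : 'I_n) : (t < lift t x)%N = (t <= x)%N.
Proof.
rewrite /= /bump; case: (leqP t x) => h /=; first by rewrite add1n ltnS h.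
by rewrite add0n ltnNge (ltnW h).
Qed.

Lemma ltn_lift2 n (t : 'I_n.+1) (a b : 'I_n) : (lift t a < lift t b)%N = (a < b)%N.
Proof. by rewrite /= !ltnNge leq_bump2. Qed.

(* Prepending the value t to s creates n - t new non-inversions. *)
Lemma noninv_lift_perm n (t : 'I_n.+1) (s : 'S_n) :
  noninv (lift_perm ord0 t s) = (n - t + noninv s)%N.
Proof.
rewrite /noninv big_ord_recl; congr (_ + _)%N.
  rewrite big_ord_recl /= add0n.
  under eq_bigr => k _ do rewrite lift_perm_id lift_perm_lift ltn_lift.
  by rewrite -sum_ord_geq [RHS](reindex_inj (@perm_inj _ s)).
apply: eq_bigr => i _; rewrite big_ord_recl /= add0n.
by apply: eq_bigr => k _; rewrite !lift_perm_lift ltn_lift2.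
Qed.

Lemma noninv_onto n v : (v <= 'C(n, 2))%N -> exists s : 'S_n, noninv s = v.
Proof.
elim: n v => [|n IHn] v le_v.
  by exists 1%g; move: le_v; rewrite /noninv big_ord0 bin0n leqn0 => /eqP.
pose a := minn v 'C(n, 2).
have [s noninv_s] := IHn a (geq_minr _ _).
have le_va : (v - a <= n)%N by move: le_v; rewrite binS bin1 /a; lia.
have lt_t : (n - (v - a) < n.+1)%N by rewrite ltnS leq_subr.
exists (lift_perm ord0 (Ordinal lt_t) s).
by rewrite noninv_lift_perm /= noninv_s subKn // subnK // geq_minl.
Qed.

Definition perm_asm_mx n (s : 'S_n) : 'M['I_3]_n :=
  \matrix_(i, j) if s i == j then @Ordinal 3 1 isT else ord0.

Lemma perm_asm_mxE n (s : 'S_n) i j :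
  map_mx ent (perm_asm_mx s) i j = (s i == j)%:R.
Proof. by rewrite !mxE; case: (s i == j). Qed.

Lemma alt_ok_indicator n (a : 'I_n) :
  alt_ok [seq (x == a)%:R : int | x <- enum 'I_n].
Proof.
rewrite /alt_ok filter_map (eq_filter (a2 := pred1 a)); last by move=> x /=; case: (x == a).
by rewrite filter_pred1_uniq ?enum_uniq ?mem_enum //= eqxx.
Qed.

Lemma perm_asm_mx_is_asm n (s : 'S_n) : is_asm (map_mx ent (perm_asm_mx s)).
Proof.
apply/andP; split; apply/forallP => i.
  under eq_map => j do rewrite perm_asm_mxE eq_sym.
  exact: alt_ok_indicator.
under eq_map => j do rewrite perm_asm_mxE (canF_eq (permK s)).
exact: alt_ok_indicator.
Qed.

Definition perm_asm n (s : 'S_n) : ASM n := exist _ (perm_asm_mx s) (perm_asm_mx_is_asm s).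

Lemma sum_indicator n (P : pred 'I_n) (a : 'I_n) :
  \sum_(x < n | P x) (a == x)%:R = (P a)%:R :> int.
Proof.
case Pa: (P a).
  rewrite (bigD1 a) //= eqxx big1 ?addr0 // => x /andP[_ xa].
  by rewrite eq_sym (negbTE xa).
by rewrite big1 // => x Px; case: eqP => // ax; rewrite ax Px in Pa.
Qed.

(* In row i and column s k, the column above is empty iff i <= k and the row to the left holds the 1 iff s i < s k. *)
Lemma nw_perm_asm n (s : 'S_n) : nw (perm_asm s) = noninv s.
Proof.
rewrite /nw card_pair_set /noninv; apply: eq_bigr => i _.
rewrite (reindex_inj (@perm_inj _ s)); apply: eq_bigr => k _ /=.
rewrite /asm_mx /= !perm_asm_mxE.
under eq_bigr => i' _ do rewrite perm_asm_mxE (inj_eq (@perm_inj _ s)) eq_sym.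
under [X in _ && (_ && (X == 1))]eq_bigr => j' _ do rewrite perm_asm_mxE.
rewrite !sum_indicator (inj_eq (@perm_inj _ s)).
case: (ltngtP i k) => [lt_ik | _ | /val_inj ->]; last by rewrite eqxx.
  have /negbTE -> : i != k by rewrite -(inj_eq val_inj) ltn_eqF.
  by case: (s i < s k)%N.
by rewrite andbF.
Qed.

Theorem proposition4p7 (K : fieldType) (charK0 : [pchar K]%R =i pred0) (n : nat) :
  quot_dim K n = ('C(n, 2) + 1)%N.
Proof.
have nw_lt (d : ASM n) : (nw d < 'C(n, 2) + 1)%N by rewrite addn1 ltnS nw_leq_bin2.
have nw_onto v : (v < 'C(n, 2) + 1)%N -> exists d : ASM n, nw d = v.
  rewrite addn1 ltnS => /noninv_onto[s noninv_s].
  by exists (perm_asm s); rewrite nw_perm_asm.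
exact: dim_fiber_quotient nw_lt nw_onto.
Qed.
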